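(* For an integer $k\ge 2$, let $G_k$ be the graph obtained from $k$ vertex-disjoint paths $a_jb_jc_jd_je_jf_j$ ($j\in[k]$) of order $6$ and two further new vertices $x,y$ by adding the edges $xa_j$ and $yf_j$ for all $j\in[k]$. Then $G_k\in\mathcal U$ for every $k\ge 2$. (Note $G_k$ has girth $14$ and minimum degree $2$.)
   Context: All graphs are finite and simple. A set $P\subseteq V(G)$ is an open packing if no two distinct vertices of $P$ have a common neighbor; it is maximal if maximal under inclusion among open packings. $\rho^o(G)$ is the maximum size of an open packing and $\rho^o_L(G)$ the minimum size of a maximal open packing; $\mathcal U$ is the class of graphs with $\rho^o_L(G)=\rho^o(G)$. $[k]=\{1,\dots,k\}$. *)

From mathcomp Require Import all_boot.
Set Implicit Arguments. Unset Strict Implicit. Unset Printing Implicit Defensive.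

Definition simple_graph (T : finType) (e : rel T) : Prop :=
  irreflexive e /\ symmetric e.

Definition onbhd (T : finType) (e : rel T) (v : T) : {set T} := [set u | e v u].

Definition open_packing (T : finType) (e : rel T) (P : {set T}) : bool :=
  [forall u in P, forall v in P, (u != v) ==> [disjoint onbhd e u & onbhd e v]].

Definition maximal_open_packing (T : finType) (e : rel T) (P : {set T}) : bool :=
  open_packing e P &&
  [forall Q : {set T}, (P \proper Q) ==> ~~ open_packing e Q].

Definition rho_o (T : finType) (e : rel T) : nat :=
  \max_(P : {set T} | open_packing e P) #|P|.

(* rho^o_L(G): minimum size of a maximal open packing
   (maximal open packings always exist, since set0 is an open packing). *)
Definition rho_oL (T : finType) (e : rel T) : nat :=
  \big[minn/#|T|]_(P : {set T} | maximal_open_packing e P) #|P|.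

Definition in_U (T : finType) (e : rel T) : Prop := rho_oL e = rho_o e.

(* The graph G_k.  Vertices: inl (j, i) is the i-th vertex (i = 0..5 for
   a,b,c,d,e,f) of the j-th path; inr false = x, inr true = y. *)
Definition Gk_vertex (k : nat) : finType := (('I_k * 'I_6) + bool)%type.

Definition Gk_edge (k : nat) : rel (Gk_vertex k) :=
  fun u v =>
    match u, v with
    | inl (j1, i1), inl (j2, i2) =>
        (j1 == j2) && ((i1.+1 == i2 :> nat) || (i2.+1 == i1 :> nat))
    | inl (_, i), inr b | inr b, inl (_, i) =>
        if b then i == 5 :> nat else i == 0 :> nat
    | inr _, inr _ => false
    end.

From mathcomp Require Import all_boot.
Set Implicit Arguments. Unset Strict Implicit. Unset Printing Implicit Defensive.

(* G_k is bipartite; call C the colour class of x, i.e. x together with the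
   vertices b_j, d_j, f_j.  For an open packing P we label every vertex of C
   by one of k+1 labels: b_j, d_j, f_j get the label j, except that f_j gets
   the extra label None when x is not in P; x gets None.  Two vertices of
   P ∩ C with equal labels would share a neighbour, so the labelling is
   injective on P ∩ C; if P is maximal, every label is used.  Hence
   |P ∩ C| = k+1 for every maximal open packing P.  The reflection of G_k
   reversing every path and swapping x and y is an involutive automorphism
   exchanging the two colour classes, so |P| = 2(k+1).  Finally, a graph
   whose maximal open packings all have the same size is in U, since a
   maximum open packing is in particular maximal. *)

Lemma bigmin_const (I : eqType) (r : seq I) (P : pred I) (F : I -> nat) n idx :
  n <= idx -> has P r -> {in r, forall i, P i -> F i = n} ->
  \big[minn/idx]_(i <- r | P i) F i = n.
Proof.
move=> le_n_idx; elim: r => //= i r IHr hasP Fn; rewrite big_cons.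
have Frn : {in r, forall i, P i -> F i = n} by move=> j rj; apply: Fn; rewrite inE rj orbT.
case: ifP hasP => [Pi _ | _ /= hasr]; last exact: IHr.
rewrite Fn ?mem_head //; apply/minn_idPl.
by case: (boolP (has P r)) => [/IHr/(_ Frn)-> | nohas]; rewrite ?big_hasC.
Qed.

Section OpenPackings.
Variables (T : finType) (e : rel T).

Lemma open_packing0 : open_packing e set0.
Proof. by apply/forallP => u; rewrite inE. Qed.

Lemma in_U_of_equicardinal n :
  (forall P, maximal_open_packing e P -> #|P| = n) -> in_U e.
Proof.
move=> cardE.
have [P0 openP0 maxP0] :=
  @arg_maxnP _ set0 (open_packing e) (fun P => #|P|) open_packing0.
have maximalP0 : maximal_open_packing e P0.
  rewrite /maximal_open_packing openP0; apply/forallP => Q; apply/implyP => ltP0Q.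
  by move: (proper_card ltP0Q); apply: contraTN => /maxP0; rewrite -leqNgt.
have rho_oE : rho_o e = n.
  rewrite -(cardE _ maximalP0); apply/eqP.
  by rewrite eqn_leq (leq_bigmax_cond _ openP0) andbT; apply/bigmax_leqP.
rewrite /in_U rho_oE /rho_oL; apply: bigmin_const.
- by rewrite -(cardE _ maximalP0) max_card.
- by apply/hasP; exists P0; rewrite ?mem_index_enum.
- by move=> P _; apply: cardE.
Qed.

Hypothesis e_sym : symmetric e.

Lemma open_packingP (P : {set T}) :
  reflect (forall u v z, u \in P -> v \in P -> e z u -> e z v -> u = v)
          (open_packing e P).
Proof.
apply: (iffP forallP) => [HP u v z Pu Pv zu zv | share u].
- have /forallP/(_ v)/implyP/(_ Pv) := implyP (HP u) Pu.
  apply: contraTeq => neq_uv; rewrite neq_uv /=; apply/negP => /disjointFr disj.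
  by move: (disj z); rewrite !inE -!(e_sym z) zu zv => /(_ isT).
- apply/implyP => Pu; apply/forallP => v; apply/implyP => Pv; apply/implyP => neq_uv.
  rewrite disjoint_subset; apply/subsetP => z; rewrite !inE => uz.
  by apply: contra neq_uv => vz; rewrite (share u v z) // e_sym.
Qed.

(* A vertex w outside a maximal open packing P is joined by a walk w, z, u
   of length two to some other member u of P; otherwise w |: P would still
   be an open packing. *)
Lemma maximal_open_packing_blocked P w :
  maximal_open_packing e P -> w \notin P ->
  exists u z, [/\ u \in P, u != w, e w z & e z u].
Proof.
case/andP => openP /forallP maxP Pw.
have [/existsP[u /existsP[z /and4P[Pu neq_uw wz zu]]] | unblocked] :=
  boolP [exists u, exists z, [&& u \in P, u != w, e w z & e z u]].
  by exists u, z.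
have blocked v z : v \in P -> e z w -> e z v -> v = w.
  move=> Pv zw zv; apply/eqP; apply: contraNT unblocked => neq_vw.
  by apply/existsP; exists v; apply/existsP; exists z; rewrite Pv neq_vw e_sym zw zv.
have ltP_wP : P \proper w |: P by apply: properUr; rewrite sub1set.
have /negP[] := implyP (maxP (w |: P)) ltP_wP.
apply/open_packingP => u v z; rewrite !inE.
move=> /predU1P[-> | Pu] /predU1P[-> | Pv] zu zv //.
- exact/esym/(blocked v z).
- exact: (blocked u z).
- exact: (open_packingP _ openP u v z).
Qed.

Section Involution.
Variable f : T -> T.
Hypotheses (fK : involutive f) (f_edge : forall u v, e (f u) (f v) = e u v).

Lemma open_packing_image P : open_packing e P -> open_packing e (f @: P).
Proof.
move/open_packingP => share; apply/open_packingP => _ _ z /imsetP[u Pu ->] /imsetP[v Pv ->].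
by rewrite -{1 2}(fK z) !f_edge => zu zv; rewrite (share u v (f z)).
Qed.

Lemma maximal_open_packing_image P :
  maximal_open_packing e P -> maximal_open_packing e (f @: P).
Proof.
have ffE (A : {set T}) : f @: (f @: A) = A by rewrite -imset_comp (eq_imset _ fK) imset_id.
case/andP => openP /forallP maxP; rewrite /maximal_open_packing open_packing_image //=.
apply/forallP => Q; apply/implyP => ltPQ; move: (maxP (f @: Q)); apply: contraTN => openQ.
rewrite negb_imply negbK open_packing_image // andbT.
by have := imset_proper (in2W (inv_inj fK)) ltPQ; rewrite ffE.
Qed.
End Involution.
End OpenPackings.

Section GraphGk.
Variable k : nat.
Local Notation T := (Gk_vertex k).
Local Notation e := (@Gk_edge k).

Lemma Gk_sym : symmetric e.
Proof. by case=> [[j i]|b] [[j' i']|b'] //=; rewrite eq_sym orbC. Qed.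

Definition o0 : 'I_6 := @Ordinal 6 0 isT.
Definition o1 : 'I_6 := @Ordinal 6 1 isT.
Definition o2 : 'I_6 := @Ordinal 6 2 isT.
Definition o3 : 'I_6 := @Ordinal 6 3 isT.
Definition o4 : 'I_6 := @Ordinal 6 4 isT.
Definition o5 : 'I_6 := @Ordinal 6 5 isT.

Lemma oE0 (H : 0 < 6) : Ordinal H = o0. Proof. exact: val_inj. Qed.
Lemma oE1 (H : 1 < 6) : Ordinal H = o1. Proof. exact: val_inj. Qed.
Lemma oE2 (H : 2 < 6) : Ordinal H = o2. Proof. exact: val_inj. Qed.
Lemma oE3 (H : 3 < 6) : Ordinal H = o3. Proof. exact: val_inj. Qed.
Lemma oE4 (H : 4 < 6) : Ordinal H = o4. Proof. exact: val_inj. Qed.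
Lemma oE5 (H : 5 < 6) : Ordinal H = o5. Proof. exact: val_inj. Qed.

Definition pv (j : 'I_k) (i : 'I_6) : T := inl (j, i).
Definition vx : T := inr false.
Definition vy : T := inr true.

Ltac neighbours := case=> [[? [[|[|[|[|[|[|?]]]]]] ?]]|[]] //=;
  rewrite ?oE0 ?oE1 ?oE2 ?oE3 ?oE4 ?oE5 ?andbT ?andbF //;
  try (move/eqP=> <-); rewrite /pv /vx /vy; eauto.

Lemma nbr_x z : e vx z -> exists j, z = pv j o0. Proof. move: z; neighbours. Qed.
Lemma nbr_y z : e vy z -> exists j, z = pv j o5. Proof. move: z; neighbours. Qed.
Lemma nbr_a j z : e (pv j o0) z -> z = vx \/ z = pv j o1. Proof. move: z; neighbours. Qed.
Lemma nbr_b j z : e (pv j o1) z -> z = pv j o0 \/ z = pv j o2. Proof. move: z; neighbours. Qed.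
Lemma nbr_c j z : e (pv j o2) z -> z = pv j o1 \/ z = pv j o3. Proof. move: z; neighbours. Qed.
Lemma nbr_d j z : e (pv j o3) z -> z = pv j o2 \/ z = pv j o4. Proof. move: z; neighbours. Qed.
Lemma nbr_e j z : e (pv j o4) z -> z = pv j o3 \/ z = pv j o5. Proof. move: z; neighbours. Qed.
Lemma nbr_f j z : e (pv j o5) z -> z = pv j o4 \/ z = vy. Proof. move: z; neighbours. Qed.

(* The colour class C of x: x, b_j, d_j and f_j. *)
Definition x_side (v : T) : bool :=
  match v with inl (_, i) => odd i | inr b => ~~ b end.

Definition x_class : {set T} := [set v | x_side v].

(* The label of a vertex of C with respect to P.  Vertices with the same
   label lie at distance two, except b_j and f_j, which cannot both be in an
   open packing P: if x is in P then b_j shares a_j with x, and otherwise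
   f_j gets the label None. *)
Definition label (P : {set T}) (v : T) : option 'I_k :=
  match v with
  | inl (j, i) => if (i == 5 :> nat) && (vx \notin P) then None else Some j
  | inr _ => None
  end.

(* Labels are distinct on P ∩ C; each case exhibits a common neighbour
   (c_j, e_j or y), or a contradiction with x in P via a_j. *)
Lemma label_inj P : open_packing e P -> {in P :&: x_class &, injective (label P)}.
Proof.
move/(open_packingP Gk_sym) => share u v; rewrite !inE => /andP[Pu Xu] /andP[Pv Xv].
case: u Pu Xu => [[j [[|[|[|[|[|[|?]]]]]] ?]]|[]] //= Pu _;
case: v Pv Xv => [[j' [[|[|[|[|[|[|?]]]]]] ?]]|[]] //= Pv _;
rewrite ?oE1 ?oE3 ?oE5 in Pu Pv *; rewrite ?Pu ?Pv //=.
all: case: (boolP (vx \in P)) => //= Px.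
all: first [ by case=> ->
           | by move=> _; apply: (share _ _ vy)
           | case=> eq_j; subst j' ].
all: first [ by apply: (share _ _ (pv j o2)); rewrite /= ?eqxx
           | by apply: (share _ _ (pv j o4)); rewrite /= ?eqxx
           | by have := share _ _ (pv j o0) Pu Px; rewrite /= eqxx => /(_ isT isT)
           | by have := share _ _ (pv j o0) Pv Px; rewrite /= eqxx => /(_ isT isT) ].
Qed.

Section MaximalPacking.
Variable P : {set T}.
Hypothesis maxP : maximal_open_packing e P.

Let share : forall u v z, u \in P -> v \in P -> e z u -> e z v -> u = v.
Proof. exact/(open_packingP Gk_sym)/(andP maxP).1. Qed.

Let blocked w := @maximal_open_packing_blocked _ _ Gk_sym P w maxP.

(* If x is in P, then d_j or f_j is in P: a walk d_j, c_j, b_j would make b_j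
   and x share a_j. *)
Lemma maximal_d_or_f j : vx \in P -> pv j o3 \in P \/ pv j o5 \in P.
Proof.
move=> Px; case: (boolP (pv j o3 \in P)) => [|Pd]; [by left | right].
have [u [z [Pu neq_ud dz zu]]] := blocked Pd.
case: (nbr_d dz) => ?; subst z.
- case: (nbr_c zu) => ?; subst u; last by rewrite eqxx in neq_ud.
  by have := share (z := pv j o0) Pu Px; rewrite /= eqxx => /(_ isT isT).
- by case: (nbr_e zu) => ?; subst u; first rewrite eqxx in neq_ud.
Qed.

(* If x is not in P, then b_j or d_j is in P: a walk b_j, a_j, x is excluded. *)
Lemma maximal_b_or_d j : vx \notin P -> pv j o1 \in P \/ pv j o3 \in P.
Proof.
move=> Px; case: (boolP (pv j o1 \in P)) => [|Pb]; [by left | right].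
have [u [z [Pu neq_ub bz zu]]] := blocked Pb.
case: (nbr_b bz) => ?; subst z.
- case: (nbr_a zu) => ?; subst u; last by rewrite eqxx in neq_ub.
  by rewrite Pu in Px.
- by case: (nbr_c zu) => ?; subst u; first rewrite eqxx in neq_ub.
Qed.

(* If x is not in P, some f_j is in P: x is blocked through some a_j, so b_j
   is in P; then f_j is blocked, through e_j (impossible, as d_j and b_j
   would share c_j) or through y and some f_j'. *)
Lemma maximal_some_f : vx \notin P -> exists j, pv j o5 \in P.
Proof.
move=> Px; have [u [z [Pu neq_ux xz zu]]] := blocked Px.
have [j ?] := nbr_x xz; subst z.
case: (nbr_a zu) => ?; subst u; first by rewrite eqxx in neq_ux.
have [/existsP[j' Pf] | no_f] := boolP [exists j', pv j' o5 \in P]; first by exists j'.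
have Pf : pv j o5 \notin P by apply: contra no_f => Pf; apply/existsP; exists j.
have [u [z [Pu' neq_uf fz zu']]] := blocked Pf.
case: (nbr_f fz) => ?; subst z.
- case: (nbr_e zu') => ?; subst u; last by rewrite eqxx in neq_uf.
  by have := share (z := pv j o2) Pu Pu'; rewrite /= eqxx => /(_ isT isT).
- have [j' ?] := nbr_y zu'; subst u.
  by case/existsP: no_f; exists j'.
Qed.

(* On a maximal open packing every label is used: by the three facts above,
   P ∩ C contains a vertex of label j for each j, and x or some f_j. *)
Lemma label_onto s : exists2 v, v \in P :&: x_class & label P v = s.
Proof.
case: s => [j|]; case: (boolP (vx \in P)) => Px.
- by case: (maximal_d_or_f j Px) => Pv; [exists (pv j o3) | exists (pv j o5)];
    rewrite ?inE ?Pv //= ?Px.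
- by case: (maximal_b_or_d j Px) => Pv; [exists (pv j o1) | exists (pv j o3)];
    rewrite ?inE ?Pv.
- by exists vx; rewrite ?inE ?Px.
- by have [j Pf] := maximal_some_f Px; exists (pv j o5); rewrite ?inE ?Pf //= ?Px.
Qed.

Lemma card_x_side : #|P :&: x_class| = k.+1.
Proof.
rewrite -(card_in_imset (label_inj (andP maxP).1)).
have -> : label P @: (P :&: x_class) = setT.
  by apply/setP => s; rewrite inE; have [v Xv <-] := label_onto s; apply: imset_f.
by rewrite cardsT card_option card_ord.
Qed.
End MaximalPacking.

Definition flip (v : T) : T :=
  match v with inl (j, i) => inl (j, rev_ord i) | inr b => inr (~~ b) end.

Lemma flipK : involutive flip.
Proof. by case=> [[j i]|b] /=; rewrite ?rev_ordK ?negbK. Qed.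

Lemma flip_edge u v : e (flip u) (flip v) = e u v.
Proof.
by case: u => [[j [[|[|[|[|[|[|?]]]]]] ?]]|[]];
   case: v => [[j' [[|[|[|[|[|[|?]]]]]] ?]]|[]].
Qed.

Lemma x_side_flip v : x_side (flip v) = ~~ x_side v.
Proof. by case: v => [[j [[|[|[|[|[|[|?]]]]]] ?]]|[]]. Qed.

(* The vertices of P outside C are the reflections of those of flip @: P in C. *)
Lemma card_split_flip (P : {set T}) : #|P| = #|P :&: x_class| + #|flip @: P :&: x_class|.
Proof.
rewrite -(cardsID x_class P); congr (_ + _).
rewrite -(card_imset _ (inv_inj flipK)) !(can_imset_pre _ flipK).
by apply: eq_card => v; rewrite !inE x_side_flip negbK andbC.
Qed.

Lemma card_maximal P : maximal_open_packing e P -> #|P| = k.+1 + k.+1.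
Proof.
move=> maxP; rewrite card_split_flip !card_x_side //.
exact: (maximal_open_packing_image Gk_sym flipK flip_edge maxP).
Qed.
End GraphGk.

Theorem mainTheorem16 (k : nat) : 2 <= k -> in_U (@Gk_edge k).
Proof. by move=> _; apply: (in_U_of_equicardinal (@card_maximal k)). Qed.
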